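(* Let $f:\mathbb{R}^n\to\mathbb{R}$ be differentiable with $\nabla f$ $L$-Lipschitz continuous, and let $\alpha_k$ be the quantities computed in Algorithm 3 (at iterations with $\nabla f(x^k)\ne0$), with $0\le\beta\le1$. Then for every $k$, $$\alpha_k\ge\alpha_{\min}:=\frac{(1-\beta)\left(1-\frac{L\overline{h}}{4}\right)+\beta(1-\nu)}{2+2\beta^2\nu^2}.$$
   Context: Algorithm 3: parameters $0<\mu<\nu<1$, $0<\underline{h}<1\le\gamma_0^0\le\overline{h}<\frac4L$, $0\le\beta\le1$, $\theta\in(0,1)$, $\tau>1$, $\eta\in(0,2)$, starting point $x^0$; run while $\nabla f(x^k)\neq0$. At iteration $k$: for $\gamma>0$ let $z^k(\gamma)=x^k-\gamma\nabla f(x^k)$ and $r_k(\gamma)=\gamma\|\nabla f(z^k(\gamma))-\nabla f(x^k)\|/\|z^k(\gamma)-x^k\|$; starting from $\gamma_0^k$, while $r_k(\gamma_l^k)>\nu$ set $\gamma_{l+1}^k=\gamma_l^k\theta\min\{1,1/r_k(\gamma_l^k)\}$; let $h_k$ be the first $\gamma_l^k$ with $r_k(\gamma_l^k)\le\nu$. Then $z^k=x^k-h_k\nabla f(x^k)$ and $x^{k+1}=x^k-\eta\alpha_kh_k\big(\nabla f(x^k)-\beta(\nabla f(x^k)-\nabla f(z^k))\big)$ with $$\alpha_k=\frac{(1-\beta)\left(1-\frac{Lh_k}{4}\right)\|x^k-z^k\|^2+\beta\langle x^k-z^k,h_k\nabla f(z^k)\rangle}{h_k^2\|\nabla f(x^k)-\beta(\nabla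 f(x^k)-\nabla f(z^k))\|^2};$$ finally $\gamma_0^{k+1}=\mathbf{P}_{[\underline{h},\overline{h}]}(\tau h_k)$ if $r_k(h_k)\le\mu$, else $\gamma_0^{k+1}=\mathbf{P}_{[\underline{h},\overline{h}]}(h_k)$, where $\mathbf{P}_{[a,b]}$ is projection onto $[a,b]$. *)

From HB Require Import structures.
From mathcomp Require Import all_boot all_order all_algebra.
From mathcomp Require Import all_classical all_reals all_analysis.
Set Implicit Arguments. Unset Strict Implicit. Unset Printing Implicit Defensive.
Import Order.TTheory GRing.Theory Num.Theory.
Import numFieldNormedType.Exports.
Local Open Scope ring_scope.

Section Alg3.
Variables (R : realType) (n : nat).
Notation vec := 'rV[R]_n.

Definition dotv (u v : vec) : R := (u *m v^T) 0 0.
Definition enorm (u : vec) : R := Num.sqrt (dotv u u).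

Definition projI (a b t : R) : R := Num.min b (Num.max a t).

(* g plays the role of the gradient of f *)
Variable g : vec -> vec.

Definition zk (x : vec) (gam : R) : vec := x - gam *: g x.

Definition rk (x : vec) (gam : R) : R :=
  gam * enorm (g (zk x gam) - g x) / enorm (zk x gam - x).

Fixpoint bt (x : vec) (theta gam0 : R) (l : nat) : R :=
  match l with
  | 0%N => gam0
  | l'.+1 => let gam := bt x theta gam0 l' in
             gam * theta * Num.min 1 (1 / rk x gam)
  end.

Definition first_accept (x : vec) (theta nu gam0 h : R) : Prop :=
  exists l : nat, h = bt x theta gam0 l /\ rk x h <= nu /\
    forall l' : nat, (l' < l)%N -> nu < rk x (bt x theta gam0 l').

Definition alphak (L beta : R) (x : vec) (h : R) : R :=
  let z := zk x h in
  ((1 - beta) * (1 - L * h / 4) * enorm (x - z) ^+ 2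
     + beta * dotv (x - z) (h *: g z))
  / (h ^+ 2 * enorm (g x - beta *: (g x - g z)) ^+ 2).

(* A run of Algorithm 3: iterates x^k, initial trial steps gamma_0^k, and
   accepted steps h_k; the step relations are imposed at every iteration k
   that the algorithm reaches (grad f(x^j) <> 0 for all j <= k). *)
Definition alg3_run (L mu nu hlo hhi gam00 beta theta tau eta : R)
    (x : nat -> vec) (gam0 h : nat -> R) : Prop :=
  gam0 0%N = gam00 /\
  forall k : nat, (forall j : nat, (j <= k)%N -> g (x j) != 0) ->
    [/\ first_accept (x k) theta nu (gam0 k) (h k),
        x k.+1 = x k - (eta * alphak L beta (x k) (h k) * h k)
                         *: (g (x k) - beta *: (g (x k) - g (zk (x k) (h k))))
      & gam0 k.+1 = if rk (x k) (h k) <= mu then projI hlo hhi (tau * h k)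
                    else projI hlo hhi (h k)].

End Alg3.

(* Write G := grad f(x^k) and D := grad f(z^k) - G.  Since x^k - z^k = h_k G,
   h_k^2 cancels from alpha_k, leaving
     ((1-beta)(1-L h_k/4)|G|^2 + beta(|G|^2 + <G,D>)) / |G + beta D|^2,
   and the acceptance test r_k(h_k) <= nu of the backtracking reads |D| <= nu |G|.
   Cauchy-Schwarz bounds the numerator below by
   ((1-beta)(1-L hbar/4) + beta(1-nu)) |G|^2 (as h_k <= hbar), while
   |G + beta D|^2 <= 2|G|^2 + 2 beta^2 |D|^2 <= (2 + 2 beta^2 nu^2) |G|^2 bounds the
   denominator above; the denominator is positive because beta |D| <= nu |G| < |G|. *)
From HB Require Import structures.
From mathcomp Require Import all_boot all_order all_algebra.
From mathcomp Require Import all_classical all_reals all_analysis.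
From mathcomp Require Import ring lra.
Set Implicit Arguments. Unset Strict Implicit. Unset Printing Implicit Defensive.
Import Order.TTheory GRing.Theory Num.Theory.
Import numFieldNormedType.Exports.
Local Open Scope ring_scope.

Section EuclideanGeometry.
Variables (R : realType) (n : nat).
Implicit Types (a : R) (u v w : 'rV[R]_n).

Lemma dotvE u v : dotv u v = \sum_i u 0 i * v 0 i.
Proof. by rewrite /dotv mxE; apply: eq_bigr => i _; rewrite mxE. Qed.

Lemma dotvC u v : dotv u v = dotv v u.
Proof. by rewrite !dotvE; apply: eq_bigr => i _; rewrite mulrC. Qed.

Lemma dotvDl u v w : dotv (u + v) w = dotv u w + dotv v w.
Proof. by rewrite !dotvE -big_split; apply: eq_bigr => i _; rewrite mxE mulrDl. Qed.

Lemma dotvZl a u v : dotv (a *: u) v = a * dotv u v.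
Proof. by rewrite !dotvE mulr_sumr; apply: eq_bigr => i _; rewrite mxE mulrA. Qed.

Lemma dotvNl u v : dotv (- u) v = - dotv u v.
Proof. by rewrite -scaleN1r dotvZl mulN1r. Qed.

Lemma dotvDr u v w : dotv u (v + w) = dotv u v + dotv u w.
Proof. by rewrite dotvC dotvDl !(dotvC u). Qed.

Lemma dotvZr a u v : dotv u (a *: v) = a * dotv u v.
Proof. by rewrite dotvC dotvZl dotvC. Qed.

Lemma dotvNr u v : dotv u (- v) = - dotv u v.
Proof. by rewrite dotvC dotvNl dotvC. Qed.

Lemma dotvv_ge0 u : 0 <= dotv u u.
Proof. by rewrite dotvE; apply: sumr_ge0 => i _; rewrite -expr2 sqr_ge0. Qed.

Lemma dotvv_eq0 u : (dotv u u == 0) = (u == 0).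
Proof.
apply/idP/eqP => [|->]; last by rewrite dotvE big1 // => i _; rewrite mxE mul0r.
rewrite dotvE psumr_eq0 => [/allP u0|i _]; last by rewrite -expr2 sqr_ge0.
apply/matrixP => i j; rewrite ord1 mxE.
by have := u0 j (mem_index_enum j); rewrite mulf_eq0 orbb => /eqP.
Qed.

Lemma enorm_ge0 u : 0 <= enorm u.
Proof. exact: sqrtr_ge0. Qed.

Lemma enorm_sqr u : enorm u ^+ 2 = dotv u u.
Proof. by rewrite sqr_sqrtr ?dotvv_ge0. Qed.

Lemma enorm_eq0 u : (enorm u == 0) = (u == 0).
Proof. by rewrite sqrtr_eq0 le_eqVlt ltNge dotvv_ge0 orbF dotvv_eq0. Qed.

Lemma enorm_gt0 u : (0 < enorm u) = (u != 0).
Proof. by rewrite lt_neqAle enorm_ge0 andbT eq_sym enorm_eq0. Qed.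

Lemma enormZ a u : enorm (a *: u) = `|a| * enorm u.
Proof.
by rewrite /enorm dotvZl dotvZr mulrA -expr2 sqrtrM ?sqr_ge0 // sqrtr_sqr.
Qed.

Lemma enormN u : enorm (- u) = enorm u.
Proof. by rewrite -scaleN1r enormZ normrN1 mul1r. Qed.

Lemma enormD_sqr u v :
  enorm (u + v) ^+ 2 = enorm u ^+ 2 + 2 * dotv u v + enorm v ^+ 2.
Proof. by rewrite !enorm_sqr !(dotvDl, dotvDr) (dotvC v u); ring. Qed.

Lemma dotv_ge_neg_enorm u v : - (enorm u * enorm v) <= dotv u v.
Proof.
have [->|] := eqVneq u 0.
  by rewrite -(scale0r 0) dotvZl enormZ normr0 !mul0r oppr0.
rewrite -enorm_gt0 => Au.
have := enormD_sqr (enorm u ^+ 2 *: v) (- (dotv u v) *: u).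
rewrite !enormZ dotvZl dotvZr normrN => E.
have : 0 <= enorm (enorm u ^+ 2 *: v + (- dotv u v) *: u) ^+ 2 by rewrite sqr_ge0.
rewrite E !exprMn !real_normK ?num_real // (dotvC v) => H.
have c2 : dotv u v ^+ 2 <= (enorm u * enorm v) ^+ 2.
  by rewrite -(ler_pM2l (exprn_gt0 2 Au)); nra.
have := mulr_ge0 (ltW Au) (enorm_ge0 v); nra.
Qed.

Lemma enormD_sqr_le u v : enorm (u + v) ^+ 2 <= 2 * (enorm u ^+ 2 + enorm v ^+ 2).
Proof.
have := sqr_ge0 (enorm (u - v)).
by rewrite !enormD_sqr enormN dotvNr; lra.
Qed.

Lemma enormD_sqr_ge u v : (enorm u - enorm v) ^+ 2 <= enorm (u + v) ^+ 2.
Proof. by rewrite enormD_sqr; have := dotv_ge_neg_enorm u v; nra. Qed.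

End EuclideanGeometry.

Lemma ler_ratio (R : realFieldType) (K M a N D : R) :
  0 <= K -> 0 < a -> 0 < D -> K * a <= N -> D <= M * a -> K / M <= N / D.
Proof.
move=> K0 a0 D0 KaN DMa.
have M0 : 0 < M by rewrite -(pmulr_lgt0 _ a0); apply: lt_le_trans DMa.
rewrite ler_pdivrMr // mulrAC ler_pdivlMr //.
by apply: le_trans (ler_wpM2l K0 DMa) _; rewrite mulrA mulrAC ler_wpM2r // ltW.
Qed.

Section Algorithm3.
Variables (R : realType) (n : nat) (g : 'rV[R]_n -> 'rV[R]_n).
Implicit Types (y : 'rV[R]_n) (nu theta h : R).

Lemma rk_ge0 y h : 0 <= h -> 0 <= rk g y h.
Proof. by move=> h0; rewrite /rk divr_ge0 ?mulr_ge0 ?enorm_ge0. Qed.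

Lemma bt_gt0_le y theta (gam0 : R) l : 0 < gam0 -> 0 < theta <= 1 ->
    (forall l', (l' < l)%N -> 0 < rk g y (bt g y theta gam0 l')) ->
  0 < bt g y theta gam0 l <= gam0.
Proof.
move=> gam00 /andP[theta0 theta1]; elim: l => [|l IH] rk0; first by rewrite gam00 lexx.
have /andP[bt0 btle] := IH (fun l' lt_l' => rk0 l' (ltnW lt_l')).
have r_gt0 := rk0 l (ltnSn l).
rewrite /=; set r := rk _ _ _ in r_gt0 *.
have m0 : 0 < Num.min 1 (1 / r) by rewrite lt_min ltr01 divr_gt0.
have m1 : Num.min 1 (1 / r) <= 1 by rewrite ge_min lexx.
rewrite !mulr_gt0 //=; apply: le_trans btle.
by rewrite -mulrA ler_piMr ?mulr_ile1 ?(ltW bt0) ?(ltW theta0) ?(ltW m0).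
Qed.

Lemma first_accept_bounds y theta nu (gam0 : R) h :
    0 < gam0 -> 0 < theta <= 1 -> 0 <= nu ->
    first_accept g y theta nu gam0 h ->
  [/\ 0 < h, h <= gam0 & rk g y h <= nu].
Proof.
move=> gam00 theta01 nu0 [l [-> [rkle rkgt]]].
have rk_gt0 l' (lt_l' : (l' < l)%N) := le_lt_trans nu0 (rkgt l' lt_l').
by case/andP: (bt_gt0_le gam00 theta01 rk_gt0).
Qed.

Lemma projI_in (a b t : R) : a <= b -> a <= projI a b t <= b.
Proof. by move=> ab; rewrite /projI le_min ge_min le_max !lexx ab /= ?orbT. Qed.

Lemma alg3_run_gam0_in L mu nu hlo hhi gam00 beta theta tau eta x (gam0 hs : nat -> R) k :
    hlo <= gam00 <= hhi ->
    alg3_run g L mu nu hlo hhi gam00 beta theta tau eta x gam0 hs ->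
    (forall j, (j <= k)%N -> g (x j) != 0) ->
  hlo <= gam0 k <= hhi.
Proof.
move=> gam00_in [gam0_0 run]; case: k => [|k] gx0; first by rewrite gam0_0.
have hlohhi : hlo <= hhi by case/andP: gam00_in; apply: le_trans.
have [_ _ ->] := run k (fun j le_jk => gx0 j (leqW le_jk)).
by case: ifP => _; apply: projI_in.
Qed.

Lemma rk_zk y h : 0 < h ->
  rk g y h = enorm (g (zk g y h) - g y) / enorm (g y).
Proof.
move=> h0; rewrite /rk /zk addrAC subrr add0r enormN enormZ gtr0_norm //.
by rewrite -mulf_div divff ?gt_eqF // mul1r.
Qed.

Lemma alphakE L beta y h : h != 0 ->
  let G := g y in let D := g (zk g y h) - g y in
  alphak g L beta y h =
    ((1 - beta) * (1 - L * h / 4) * enorm G ^+ 2 + beta * (enorm G ^+ 2 + dotv G D))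
    / enorm (G + beta *: D) ^+ 2.
Proof.
move=> h0 G D; rewrite /alphak.
have -> : y - zk g y h = h *: G by rewrite /zk opprB addrCA subrr addr0.
have -> : g (zk g y h) = G + D by rewrite /D addrC subrK.
have -> : G - beta *: (G - (G + D)) = G + beta *: D.
  by rewrite opprD addNKr scalerN opprK.
rewrite enormZ exprMn real_normK ?num_real // !dotvZl dotvZr dotvDr -enorm_sqr.
by rewrite invfM (mulrA _ (h ^+ 2)^-1); congr (_ * _); field.
Qed.

End Algorithm3.

Definition alpha_min (R : realType) (L hhi beta nu : R) : R :=
  ((1 - beta) * (1 - L * hhi / 4) + beta * (1 - nu)) / (2 + 2 * beta ^+ 2 * nu ^+ 2).

Lemma alpha_min_le_alphak (R : realType) (n : nat) (g : 'rV[R]_n -> 'rV[R]_n)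
    (L hhi beta nu : R) (y : 'rV[R]_n) (h : R) :
    0 <= L -> L * hhi <= 4 -> 0 <= beta <= 1 -> nu < 1 ->
    g y != 0 -> 0 < h -> h <= hhi -> rk g y h <= nu ->
  alpha_min L hhi beta nu <= alphak g L beta y h.
Proof.
move=> L0 Lhhi /andP[beta0 beta1] nu1 gy0 h0 hhhi rkle.
rewrite alphakE ?gt_eqF //; set G := g y; set D := g _ - g y.
have G0 : 0 < enorm G by rewrite enorm_gt0.
have DG : enorm D <= nu * enorm G by rewrite -ler_pdivrMr // -rk_zk.
have bD : enorm (beta *: D) = beta * enorm D by rewrite enormZ ger0_norm.
have cs := dotv_ge_neg_enorm G D.
have D0 := enorm_ge0 D.
apply: (ler_ratio (a := enorm G ^+ 2)).
- have : 0 <= nu by apply: le_trans rkle; apply: rk_ge0; apply: ltW.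
  nra.
- by rewrite exprn_gt0.
- apply: (lt_le_trans _ (enormD_sqr_ge G (beta *: D))); rewrite bD exprn_gt0 // subr_gt0.
  by apply: le_lt_trans (ler_wpM2l beta0 DG) _; nra.
- have LhL : L * h <= L * hhi by rewrite ler_wpM2l.
  have : enorm G * enorm D <= nu * enorm G ^+ 2.
    by rewrite mulrC expr2 mulrA ler_wpM2r // ltW.
  have : 0 <= (1 - beta) * enorm G ^+ 2 * (L * (hhi - h)) by rewrite !mulr_ge0 ?sqr_ge0; lra.
  nra.
- apply: le_trans (enormD_sqr_le G (beta *: D)) _; rewrite bD exprMn.
  have : enorm D ^+ 2 <= nu ^+ 2 * enorm G ^+ 2.
    by rewrite -exprMn lerXn2r ?nnegrE //; nra.
  have := sqr_ge0 beta; nra.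
Qed.

Theorem lemma7 (R : realType) (n : nat) (f : 'rV[R]_n -> R)
    (g : 'rV[R]_n -> 'rV[R]_n) (L : R)
    (mu nu hlo hhi gam00 beta theta tau eta : R)
    (x : nat -> 'rV[R]_n) (gam0 h : nat -> R) :
  (forall y : 'rV[R]_n, differentiable f y /\
     forall v : 'rV[R]_n, 'd f y v = dotv (g y) v) ->
  0 < L ->
  (forall y1 y2 : 'rV[R]_n, enorm (g y1 - g y2) <= L * enorm (y1 - y2)) ->
  0 < mu -> mu < nu -> nu < 1 ->
  0 < hlo -> hlo < 1 -> 1 <= gam00 -> gam00 <= hhi -> hhi < 4 / L ->
  0 <= beta -> beta <= 1 ->
  0 < theta -> theta < 1 -> 1 < tau -> 0 < eta -> eta < 2 ->
  alg3_run g L mu nu hlo hhi gam00 beta theta tau eta x gam0 h ->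
  forall k : nat, (forall j : nat, (j <= k)%N -> g (x j) != 0) ->
    ((1 - beta) * (1 - L * hhi / 4) + beta * (1 - nu))
      / (2 + 2 * beta ^+ 2 * nu ^+ 2)
    <= alphak g L beta (x k) (h k).
Proof.
move=> _ L0 _ mu0 munu nu1 hlo0 hlo1 gam00_ge1 gam00_le hhiL beta0 beta1
  theta0 theta1 _ _ _ run k gx0.
have Lhhi : L * hhi <= 4 by rewrite mulrC -ler_pdivlMr // ltW.
have gam00_in : hlo <= gam00 <= hhi by rewrite gam00_le andbT; lra.
have /andP[hlo_le gam0_le] := alg3_run_gam0_in gam00_in run gx0.
have [accept _ _] := run.2 k gx0.
have theta01 : 0 < theta <= 1 by rewrite theta0 ltW.
have [h0 hle rkle] :=
  first_accept_bounds (lt_le_trans hlo0 hlo_le) theta01 (ltW (lt_trans mu0 munu)) accept.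
have beta01 : 0 <= beta <= 1 by rewrite beta0.
exact: alpha_min_le_alphak (ltW L0) Lhhi beta01 nu1 (gx0 k (leqnn k)) h0
  (le_trans hle gam0_le) rkle.
Qed.
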